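(* Let $G$ be a graph, $k$ a positive integer, $T\subseteq V(G)$ and $v\in T$. Let $(H,\ell)=\mathcal{C}^c_k(G,T)$. Construct a labeled graph $(H',\ell')$ as follows: for every node $x$ of $H$ set $\ell'(x)=\ell(x)|_{T\setminus\{v\}}$; then iteratively contract every edge between two nodes $x,y$ with $\ell'(x)=\ell'(y)$, assigning label $\ell'(z):=\ell'(x)$ to the resulting node $z$. Then $(H',\ell')=\mathcal{C}^c_k(G,T\setminus\{v\})$. Moreover, given any certificate $S$ for $(H,\ell)$, there is a certificate $S'$ for $(H',\ell')$ such that for every $k$-coloring $\gamma$ of $G$, the $\gamma$-node of $H'$ with respect to $S'$ is the node resulting from contracting the set of nodes that contains the $\gamma$-node of $H$ with respect to $S$.
   Context: A $k$-coloring of $G$ is a map $\alpha:V(G)\to\{1,\dots,k\}$ with $\alpha(u)\ne\alpha(v)$ for all edges $uv$. $\mathcal{C}_k(G)$ has the $k$-colorings as nodes, adjacent iff they differ on exactly one vertex. For $T\subseteq V(G)$, label each coloring $\gamma$ by $\gamma|_T$. A label component is a maximal set of colorings with the same label inducing a connected subgraph of $\mathcal{C}_k(G)$. The contracted solution graph $\mathcal{C}^c_k(G,T)=(H,\ell)$ has one node $x$ per label component $S_x$, distinct $x,y$ adjacent iff some $\gamma\in S_x,\gamma'\in S_y$ are adjacent in $\mathcal{C}_k(G)$, and $\ell(x)$ the common label on $S_x$; labeled graphs are identified up to label-preserving isomorphism. Contracting an edge $uv$ replaces $u,v$ by a new vertex adjacent to all former neighbors of $u$ or $v$ (no loops or multi-edges).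 A certificate for $(H,\ell)$ is an assignment of nonempty sets $S_x$ of $k$-colorings of $G$ to the nodes $x$ such that: the $S_x$ partition the $k$-colorings of $G$; $\gamma|_T=\ell(x)$ for $\gamma\in S_x$; adjacent nodes have distinct labels; each $S_x$ induces a connected subgraph of $\mathcal{C}_k(G)$; distinct $x,y$ are adjacent iff some $\gamma\in S_x$ and $\gamma'\in S_y$ are adjacent in $\mathcal{C}_k(G)$. The $\gamma$-node with respect to a certificate $S$ is the node $x$ with $\gamma\in S_x$. *)

From mathcomp Require Import all_boot.
Set Implicit Arguments. Unset Strict Implicit. Unset Printing Implicit Defensive.

Section Defs.
Variables (V : finType) (e : rel V) (k : nat).

(* maps V -> {0,..,k-1}; colours {1..k} are renamed to 'I_k *)
Definition col := {ffun V -> 'I_k}.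

(* label gamma|_T, encoded as a partial map: None outside T *)
Definition label := {ffun V -> option 'I_k}.

Definition is_kcoloring (g : col) : bool :=
  [forall u, forall w, e u w ==> (g u != g w)].

Definition radj (g d : col) : bool := #|[set u | g u != d u]| == 1.

Definition restr (T : {set V}) (g : col) : label :=
  [ffun u => if u \in T then Some (g u) else None].

Definition restr_lab (T : {set V}) (l : label) : label :=
  [ffun u => if u \in T then l u else None].

Definition induced_connected (S : {set col}) : bool :=
  [forall g in S, forall d in S,
     connect [rel a b | [&& a \in S, b \in S & radj a b]] g d].

Definition same_label_connected (T : {set V}) (S : {set col}) : bool :=
  [&& S != set0, [forall g in S, is_kcoloring g],
      [forall g in S, forall d in S, restr T g == restr T d]
    & induced_connected S].

Definition is_label_comp (T : {set V}) (S : {set col}) : bool :=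
  same_label_connected T S &&
  [forall S' : {set col}, (S \subset S') && same_label_connected T S' ==> (S' == S)].

Definition default_label : label := [ffun => None].

End Defs.

Record lgraph (L : Type) := LGraph {
  lnode : finType;
  ladj : rel lnode;
  llab : lnode -> L }.
Arguments lnode {L} l.
Arguments ladj {L} l _ _.
Arguments llab {L} l _.

Definition lab_iso (L : Type) (A B : lgraph L) : Prop :=
  exists f : lnode A -> lnode B,
    [/\ bijective f,
        forall x y, ladj B (f x) (f y) = ladj A x y
      & forall x, llab B (f x) = llab A x].

Section Cc.
Variables (V : finType) (e : rel V) (k : nat) (T : {set V}).

Definition cc_node := {S : {set col V k} | is_label_comp e T S}.

Definition cc_adj : rel cc_node := fun x y =>
  (x != y) && [exists g in val x, exists d in val y, radj g d].

Definition cc_lab (x : cc_node) : label V k :=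
  if [pick g in val x] is Some g then restr T g else default_label V k.

Definition Cc : lgraph (label V k) := @LGraph _ cc_node cc_adj cc_lab.

Definition certificate (H : lgraph (label V k)) (S : lnode H -> {set col V k}) : Prop :=
  (forall x, S x != set0) /\
  (forall x g, g \in S x -> is_kcoloring e g) /\
  (forall g, is_kcoloring e g -> exists x, g \in S x) /\
  (forall x y g, g \in S x -> g \in S y -> x = y) /\
  (forall x g, g \in S x -> restr T g = llab H x) /\
  (forall x y, ladj H x y -> llab H x <> llab H y) /\
  (forall x, induced_connected (S x)) /\
  (forall x y, x <> y ->
     (ladj H x y <-> exists g d, [/\ g \in S x, d \in S y & radj g d])).
End Cc.

Section Contract.
Variables (V : finType) (k : nat) (v : V) (H : lgraph (label V k)).

Definition lab' (x : lnode H) : label V k := restr_lab (~: [set v]) (llab H x).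

Definition eqlab_adj : rel (lnode H) := fun x y => ladj H x y && (lab' x == lab' y).

(* set of nodes of H merged into the node containing x *)
Definition block (x : lnode H) : {set lnode H} := [set y | connect eqlab_adj x y].

Definition blocks : {set {set lnode H}} := block @: [set: lnode H].

Definition cnode := {B : {set lnode H} | B \in blocks}.

Definition cblock (x : lnode H) : cnode := exist _ (block x) (imset_f block (in_setT x)).

Definition cadj : rel cnode := fun B C =>
  (B != C) && [exists x in val B, exists y in val C, ladj H x y].

Definition clab (B : cnode) : label V k :=
  if [pick x in val B] is Some x then lab' x else default_label V k.

Definition contracted : lgraph (label V k) := @LGraph _ cnode cadj clab.
End Contract.

From mathcomp Require Import all_boot.
Set Implicit Arguments. Unset Strict Implicit. Unset Printing Implicit Defensive.

(* The sets of any certificate are exactly the label components: a same-label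
   connected superset of [S x] leaving [S x] would cross an edge of C_k(G) into an
   adjacent node with the same label.  Hence a certificate determines its labeled
   graph up to isomorphism, and it suffices to turn a certificate [S] of [H] into
   one of the contracted graph by merging the sets [S x] over each contracted
   block.  A block is connected along edges of [H], each realised by an edge of
   C_k(G), so the merged set stays connected; all its colourings have the same
   label on [T :\ v]; and two blocks with equal labels are not adjacent, since
   the edge between them would have been contracted. *)

Lemma connect_ind (T : finType) (r : rel T) (x : T) (P : T -> Prop) :
  P x -> (forall a b, connect r x a -> r a b -> P a -> P b) ->
  forall y, connect r x y -> P y.
Proof.
move=> Px step y /connectP [p r_p ->]; elim/last_ind: p r_p => [|p z IHp] //=.
rewrite rcons_path last_rcons => /andP [r_p r_z].
by apply: step r_z (IHp r_p); apply/connectP; exists p.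
Qed.

Section Recoloring.
Variables (V : finType) (e : rel V) (k : nat).
Implicit Types (A B : {set col V k}) (g d : col V k).

Definition radj_in A : rel (col V k) := [rel a b | [&& a \in A, b \in A & radj a b]].

Lemma radj_sym : symmetric (@radj V k).
Proof. by move=> g d; congr (_ == _); apply: eq_card => u; rewrite !inE eq_sym. Qed.

Lemma radj_in_connect_sym A : connect_sym (radj_in A).
Proof.
by apply: sym_connect_sym => g d; rewrite /radj_in /= radj_sym; case: (g \in A); case: (d \in A).
Qed.

Lemma connect_radj_in_sub A B g d :
  A \subset B -> connect (radj_in A) g d -> connect (radj_in B) g d.
Proof.
move=> sAB; apply: connect_sub => a b /and3P [aA bA ab].
by apply: connect1; rewrite /radj_in /= (subsetP sAB _ aA) (subsetP sAB _ bA).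
Qed.

Lemma induced_connectedP A :
  reflect (forall g d, g \in A -> d \in A -> connect (radj_in A) g d)
          (induced_connected A).
Proof.
apply: (iffP forall_inP) => [conn g d gA dA | conn g gA].
  exact: (forall_inP (conn g gA)).
by apply/forall_inP => d; apply: conn.
Qed.

Lemma induced_connectedU A B a b :
  induced_connected A -> induced_connected B -> a \in A -> b \in B ->
  connect (radj_in (A :|: B)) a b -> induced_connected (A :|: B).
Proof.
move=> /induced_connectedP connA /induced_connectedP connB aA bB ab.
have to_a g : g \in A :|: B -> connect (radj_in (A :|: B)) g a.
  case/setUP => [gA | gB].
    exact: connect_radj_in_sub (subsetUl A B) (connA g a gA aA).
  rewrite radj_in_connect_sym; apply: connect_trans ab _.
  exact: connect_radj_in_sub (subsetUr A B) (connB b g bB gB).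
apply/induced_connectedP => g d gU dU.
by apply: connect_trans (to_a g gU) _; rewrite radj_in_connect_sym; apply: to_a.
Qed.

Lemma induced_connected_bigcup (I : finType) (r : rel I) (S : I -> {set col V k}) i0 :
  connect_sym r -> (forall i, induced_connected (S i)) ->
  (forall i j, r i j -> exists g d, [/\ g \in S i, d \in S j & radj g d]) ->
  induced_connected (\bigcup_(i in [set j | connect r i0 j]) S i).
Proof.
set U := \bigcup_(i in _) S i => r_sym connS r_radj.
have SU i : connect r i0 i -> S i \subset U.
  by move=> i0i; apply/subsetP => g gi; apply/bigcupP; exists i; rewrite ?inE.
apply/induced_connectedP => g d /bigcupP [i /[!inE] i0i gi] /bigcupP [j /[!inE] i0j dj].
have ij : connect r i j by apply: connect_trans i0j; rewrite r_sym.
move: d dj; apply: (connect_ind (P := fun j => forall d, d \in S j -> connect (radj_in U) g d)) ij.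
  by move=> d di; apply: connect_radj_in_sub (SU i i0i) _; apply/induced_connectedP.
move=> a b ia ab conn_a d db.
have i0a : connect r i0 a := connect_trans i0i ia.
have i0b : connect r i0 b := connect_trans i0a (connect1 ab).
have [a0 [b0 [a0a b0b a0b0]]] := r_radj a b ab.
apply: connect_trans (conn_a a0 a0a) (connect_trans (connect1 (_ : radj_in U a0 b0)) _).
  by rewrite /radj_in /= a0b0 (subsetP (SU a i0a)) ?(subsetP (SU b i0b)).
by apply: connect_radj_in_sub (SU b i0b) _; apply/induced_connectedP.
Qed.

Lemma same_label_connected_restr T A g d :
  same_label_connected e T A -> g \in A -> d \in A -> restr T g = restr T d.
Proof. by case/and4P => _ _ /forall_inP lA _ gA dA; apply/eqP; apply: (forall_inP (lA g gA)). Qed.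

Lemma same_label_connectedU T A B a b :
  same_label_connected e T A -> same_label_connected e T B ->
  a \in A -> b \in B -> restr T a = restr T b -> connect (radj_in (A :|: B)) a b ->
  same_label_connected e T (A :|: B).
Proof.
move=> slA slB aA bB ab conn_ab.
have restr_a g : g \in A :|: B -> restr T g = restr T a.
  case/setUP => [gA | gB]; first exact: same_label_connected_restr slA gA aA.
  by rewrite ab; apply: same_label_connected_restr slB gB bB.
case/and4P: slA => _ colA _ connA; case/and4P: slB => _ colB _ connB.
apply/and4P; split.
- by apply/set0Pn; exists a; rewrite inE aA.
- by apply/forall_inP => g /setUP [gA | gB]; [apply: (forall_inP colA) | apply: (forall_inP colB)].
- apply/forall_inP => g gU; apply/forall_inP => d dU.
  by rewrite (restr_a g gU) (restr_a d dU).
- exact: induced_connectedU connA connB aA bB conn_ab.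
Qed.

Lemma label_comp_max T A B :
  is_label_comp e T A -> same_label_connected e T B -> A \subset B -> B = A.
Proof. by case/andP => _ /forallP maxA slB sAB; apply/eqP; have := maxA B; rewrite sAB slB. Qed.

Lemma label_comp_eq T A B g :
  is_label_comp e T A -> is_label_comp e T B -> g \in A -> g \in B -> A = B.
Proof.
move=> compA compB gA gB.
have slAB := same_label_connectedU (andP compA).1 (andP compB).1 gA gB erefl (connect0 _ _).
by rewrite -(label_comp_max compA slAB (subsetUl A B)) (label_comp_max compB slAB (subsetUr A B)).
Qed.

Lemma label_comp_exists T g :
  is_kcoloring e g -> exists2 A, is_label_comp e T A & g \in A.
Proof.
move=> col_g; have sl_g : same_label_connected e T [set g].
  apply/and4P; split; first by apply/set0Pn; exists g; rewrite inE.
  + by apply/forall_inP => a /set1P ->.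
  + by apply/forall_inP => a /set1P ->; apply/forall_inP => b /set1P ->.
  + by apply/induced_connectedP => a b /set1P -> /set1P ->; apply: connect0.
have [A /maxsetP [slA maxA] gA] := maxset_exists sl_g.
exists A; last by apply: (subsetP gA); rewrite inE.
apply/andP; split => //; apply/forallP => B; apply/implyP => /andP [sAB slB].
by rewrite (maxA B slB sAB).
Qed.

Lemma restr_setD1 (T : {set V}) v g :
  restr (T :\ v) g = restr_lab (~: [set v]) (restr T g).
Proof. by apply/ffunP => u; rewrite !ffunE !inE; case: (u == v); case: (u \in T). Qed.

End Recoloring.

Section Certificate.
Variables (V : finType) (e : rel V) (k : nat) (T : {set V}).
Variables (H : lgraph (label V k)) (S : lnode H -> {set col V k}).
Hypothesis cert : certificate e T S.

Lemma cert_ladj_irrefl : irreflexive (ladj H).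
Proof.
case: cert => _ [_ [_ [_ [_ [adj_lab _]]]]] x.
by apply/negP => /adj_lab.
Qed.

Lemma cert_ladj_radj x y :
  ladj H x y -> exists g d, [/\ g \in S x, d \in S y & radj g d].
Proof.
case: cert => _ [_ [_ [_ [_ [_ [_ adjP]]]]]] xy.
by apply/(adjP x y) => // eq_xy; rewrite eq_xy cert_ladj_irrefl in xy.
Qed.

Lemma cert_ladj_sym : symmetric (ladj H).
Proof.
case: cert => _ [_ [_ [_ [_ [_ [_ adjP]]]]]].
suff ladj_sym x y : ladj H x y -> ladj H y x by move=> x y; apply/idP/idP; apply: ladj_sym.
move=> xy; have [g [d [gx dy gd]]] := cert_ladj_radj xy.
apply/(adjP y x); last by exists d, g; rewrite radj_sym.
by move=> eq_yx; rewrite eq_yx cert_ladj_irrefl in xy.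
Qed.

Lemma cert_label_comp x : is_label_comp e T (S x).
Proof.
case: cert => nonempty [coloring [cover [_ [lab [adj_lab [conn adjP]]]]]].
have slx : same_label_connected e T (S x).
  apply/and4P; split => //; first by apply/forall_inP => g; apply: coloring.
  by apply/forall_inP => g gx; apply/forall_inP => d dx; rewrite (lab _ _ gx) (lab _ _ dx).
apply/andP; split => //; apply/forallP => B; apply/implyP => /andP [sxB slB].
rewrite eqEsubset sxB andbT; apply/subsetP => d dB.
have [g gx] := set0Pn _ (nonempty x).
have /and4P [_ colB _ connB] := slB.
have closed_x : closed (radj_in B) (S x).
  apply: (intro_closed (radj_in_connect_sym B)) => a b /and3P [aB bB ab] ax.
  have [y by_] := cover b (forall_inP colB b bB).
  case: (eqVneq x y) => [-> // | /eqP neq_xy].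
  have /adj_lab : ladj H x y by apply/(adjP x y neq_xy); exists a, b.
  by rewrite -(lab _ _ ax) -(lab _ _ by_) (same_label_connected_restr slB aB bB).
rewrite -(closed_connect closed_x (elimT (induced_connectedP _) connB g d _ dB)) //.
exact: (subsetP sxB).
Qed.

Lemma cert_lab_iso : lab_iso H (Cc e k T).
Proof.
case: cert => nonempty [_ [cover [disj [lab [_ [_ adjP]]]]]].
pose f x : cc_node e k T := exist _ (S x) (cert_label_comp x).
have f_inj : injective f.
  move=> x y /(congr1 val) /= Sxy; have [g gx] := set0Pn _ (nonempty x).
  by apply: (disj x y g gx); rewrite -Sxy.
exists f; split.
- apply: (inj_card_bij f_inj); rewrite -[X in _ <= X]cardsT -(card_imset _ f_inj).
  rewrite -cardsT; apply: subset_leq_card; apply/subsetP => c _.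
  case/andP: (valP c) => /and4P [/set0Pn [g gc] colc _ _] _.
  have [x gx] := cover g (forall_inP colc g gc).
  apply/imsetP; exists x => //; apply: val_inj.
  exact: label_comp_eq (valP c) (cert_label_comp x) gc gx.
- move=> x y; rewrite /= /cc_adj /= (inj_eq f_inj).
  case: (eqVneq x y) => [<- | neq_xy] /=; first by rewrite cert_ladj_irrefl.
  apply/idP/idP => [/existsP [g /andP [gx /existsP [d /andP [dy gd]]]] |
                    /cert_ladj_radj [g [d [gx dy gd]]]].
    by apply/(adjP x y (elimN eqP neq_xy)); exists g, d.
  by apply/existsP; exists g; rewrite gx; apply/existsP; exists d; rewrite dy.
- move=> x; rewrite /= /cc_lab /=; case: pickP => [g gx | none]; first exact: lab.
  by have [g gx] := set0Pn _ (nonempty x); rewrite none in gx.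
Qed.

End Certificate.

Section ContractedSolutionGraph.
Variables (V : finType) (e : rel V) (k : nat) (T : {set V}).

Lemma cc_lab_restr (x : cc_node e k T) g : g \in val x -> cc_lab x = restr T g.
Proof.
move=> gx; rewrite /cc_lab; case: pickP => [d dx | none]; last by rewrite none in gx.
exact: same_label_connected_restr (andP (valP x)).1 dx gx.
Qed.

Lemma Cc_certificate : certificate e T (H := Cc e k T) val.
Proof.
have slc (x : cc_node e k T) := (andP (valP x)).1.
split; [|split; [|split; [|split; [|split; [|split; [|split]]]]]].
- by move=> x; case/and4P: (slc x).
- by move=> x g; case/and4P: (slc x) => _ /forall_inP col_x _ _; apply: col_x.
- move=> g /(label_comp_exists T) [A compA gA].
  by exists (exist _ A compA).
- by move=> x y g gx gy; apply: val_inj; apply: label_comp_eq (valP x) (valP y) gx gy.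
- by move=> x g gx; rewrite /= (cc_lab_restr gx).
- move=> x y /andP [/eqP neq_xy /existsP [g /andP [gx /existsP [d /andP [dy gd]]]]].
  rewrite /= (cc_lab_restr gx) (cc_lab_restr dy) => gd_lab.
  have slU : same_label_connected e T (val x :|: val y).
    apply: (same_label_connectedU (slc x) (slc y) gx dy gd_lab).
    by apply: connect1; rewrite /radj_in /= !inE gx dy orbT gd.
  apply: neq_xy; apply: val_inj.
  by rewrite -(label_comp_max (valP x) slU (subsetUl _ _))
             (label_comp_max (valP y) slU (subsetUr _ _)).
- by move=> x; case/and4P: (slc x).
- move=> x y neq_xy; rewrite /= /cc_adj; split.
    by case/andP => _ /existsP [g /andP [gx /existsP [d /andP [dy gd]]]]; exists g, d.
  move=> [g [d [gx dy gd]]]; apply/andP; split; first exact/eqP.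
  by apply/existsP; exists g; rewrite gx; apply/existsP; exists d; rewrite dy.
Qed.

Lemma certificate_transport (H H' : lgraph (label V k)) (f : lnode H -> lnode H')
    (S' : lnode H' -> {set col V k}) :
  bijective f -> (forall x y, ladj H' (f x) (f y) = ladj H x y) ->
  (forall x, llab H' (f x) = llab H x) ->
  certificate e T S' -> certificate e T (S' \o f).
Proof.
move=> f_bij f_adj f_lab [nonempty [coloring [cover [disj [lab [adj_lab [conn adjP]]]]]]].
have f_inj := bij_inj f_bij; case: f_bij => f' ff' f'f.
split; [|split; [|split; [|split; [|split; [|split; [|split]]]]]].
- by move=> x; apply: nonempty.
- by move=> x; apply: coloring.
- by move=> g /cover [y gy]; exists (f' y); rewrite /= f'f.
- by move=> x y g gx gy; apply: f_inj; apply: disj gx gy.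
- by move=> x g gx; rewrite -f_lab; apply: lab.
- by move=> x y; rewrite -f_adj -!f_lab; apply: adj_lab.
- by move=> x; apply: conn.
- by move=> x y neq_xy; rewrite -f_adj; apply: adjP => /f_inj.
Qed.

End ContractedSolutionGraph.

Section Contraction.
Variables (V : finType) (e : rel V) (k : nat) (T : {set V}) (v : V).
Variables (H : lgraph (label V k)) (S : lnode H -> {set col V k}).
Hypothesis cert : certificate e T S.
Local Notation E := (@eqlab_adj V k v H).

Lemma eqlab_adj_connect_sym : connect_sym E.
Proof.
apply: sym_connect_sym => x y.
by rewrite /eqlab_adj (cert_ladj_sym cert) eq_sym.
Qed.

Lemma lab'_connect x y : connect E x y -> lab' v x = lab' v y.
Proof.
have closed_x : closed E [pred z | lab' v z == lab' v x].
  by move=> a b /andP [_ /eqP ab]; rewrite !inE ab.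
by move/(closed_connect closed_x); rewrite !inE eqxx => /esym/eqP.
Qed.

Lemma block_eq (x y z : lnode H) : z \in block v x -> z \in block v y -> block v x = block v y.
Proof.
rewrite !inE => xz yz; have xy : connect E x y.
  by apply: connect_trans xz _; rewrite eqlab_adj_connect_sym.
apply/setP => w; rewrite !inE; apply/idP/idP => [xw | yw]; last exact: connect_trans xy yw.
by apply: connect_trans xw; rewrite eqlab_adj_connect_sym.
Qed.

Lemma cnode_block (B : cnode v H) : exists x, val B = block v x.
Proof. by case: B => /= B /imsetP [x _ ->]; exists x. Qed.

Lemma cnode_mem_eq (B C : cnode v H) x : x \in val B -> x \in val C -> B = C.
Proof.
have [b Bb] := cnode_block B; have [c Cc] := cnode_block C.
by rewrite Bb Cc => xb xc; apply: val_inj; rewrite Bb Cc; apply: block_eq xb xc.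
Qed.

Lemma clab_mem (B : cnode v H) x : x \in val B -> clab B = lab' v x.
Proof.
have [b Bb] := cnode_block B; rewrite /clab Bb => xB.
case: pickP => [y yB | none]; last by rewrite none in xB.
by move: xB yB; rewrite !inE => xB yB; rewrite -(lab'_connect xB) (lab'_connect yB).
Qed.

Definition contract_cert (B : cnode v H) : {set col V k} := \bigcup_(x in val B) S x.

Lemma mem_contract_cert (B : cnode v H) x g :
  x \in val B -> g \in S x -> g \in contract_cert B.
Proof. by move=> xB gx; apply/bigcupP; exists x. Qed.

Lemma contract_cert_adj_lab (B C : cnode v H) : cadj B C -> clab B <> clab C.
Proof.
case/andP => /eqP neq_BC /existsP [x /andP [xB /existsP [y /andP [yC xy]]]].
rewrite (clab_mem xB) (clab_mem yC) => xy_lab; apply: neq_BC.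
have [b Bb] := cnode_block B.
have yB : y \in val B.
  move: xB; rewrite Bb !inE => bx; apply: connect_trans bx (connect1 _).
  by rewrite /eqlab_adj xy xy_lab eqxx.
exact: cnode_mem_eq yB yC.
Qed.

Lemma contract_cert_connected (B : cnode v H) : induced_connected (contract_cert B).
Proof.
case: cert => _ [_ [_ [_ [_ [_ [conn _]]]]]].
rewrite /contract_cert; have [b ->] := cnode_block B.
apply: induced_connected_bigcup eqlab_adj_connect_sym conn _ => x y /andP [xy _].
exact: (cert_ladj_radj cert xy).
Qed.

Lemma contract_cert_adjP (B C : cnode v H) : B <> C ->
  cadj B C <-> exists g d, [/\ g \in contract_cert B, d \in contract_cert C & radj g d].
Proof.
case: cert => _ [_ [_ [_ [_ [_ [_ adjP]]]]]] neq_BC.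
have neq_xy x y : x \in val B -> y \in val C -> x <> y.
  by move=> xB yC eq_xy; apply: neq_BC; rewrite eq_xy in xB; apply: cnode_mem_eq xB yC.
rewrite /cadj (introF eqP neq_BC) /=; split.
  case/existsP => x /andP [xB /existsP [y /andP [yC /(adjP x y (neq_xy x y xB yC))]]].
  case=> g [d [gx dy gd]]; exists g, d.
  by split => //; [apply: mem_contract_cert xB gx | apply: mem_contract_cert yC dy].
case=> g [d [/bigcupP [x xB gx] /bigcupP [y yC dy] gd]].
apply/existsP; exists x; rewrite xB; apply/existsP; exists y; rewrite yC /=.
by apply/(adjP x y (neq_xy x y xB yC)); exists g, d.
Qed.

Lemma contract_certificate : certificate e (T :\ v) (H := contracted v H) contract_cert.
Proof.
case: cert => nonempty [coloring [cover [disj [lab _]]]].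
split; [|split; [|split; [|split; [|split; [|split; [|split]]]]]].
- move=> B; have [b Bb] := cnode_block B; have [g gb] := set0Pn _ (nonempty b).
  by apply/set0Pn; exists g; apply: (mem_contract_cert (x := b)); rewrite // Bb inE.
- by move=> B g /bigcupP [x _ gx]; apply: coloring gx.
- move=> g /cover [x gx]; exists (cblock v x).
  by apply: (mem_contract_cert (x := x)); rewrite //= inE.
- move=> B C g /bigcupP [x xB gx] /bigcupP [y yC gy].
  by move: yC; rewrite -(disj _ _ _ gx gy); apply: cnode_mem_eq xB.
- by move=> B g /bigcupP [x xB gx]; rewrite /= (clab_mem xB) restr_setD1 (lab _ _ gx).
- exact: contract_cert_adj_lab.
- exact: contract_cert_connected.
- exact: contract_cert_adjP.
Qed.

End Contraction.

Unset Implicit Arguments.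

Theorem lemma2 (V : finType) (e : rel V) (k : nat) (T : {set V}) (v : V)
  (H : lgraph (label V k)) :
  symmetric e -> irreflexive e -> 0 < k -> v \in T ->
  lab_iso H (Cc e k T) ->
  lab_iso (contracted v H) (Cc e k (T :\ v)) /\
  (forall S : lnode H -> {set col V k}, certificate e T S ->
     exists S' : lnode (contracted v H) -> {set col V k},
       certificate e (T :\ v) S' /\
       (forall g x, is_kcoloring e g -> g \in S x -> g \in S' (cblock v x))).
Proof.
move=> _ _ _ _ [f [f_bij f_adj f_lab]].
have cert_H := certificate_transport f_bij f_adj f_lab (Cc_certificate e k T).
split; first exact: cert_lab_iso (contract_certificate v cert_H).
move=> S cert_S; exists (contract_cert (v := v) S); split; first exact: contract_certificate.
by move=> g x _ gx; apply: (mem_contract_cert (x := x)); rewrite //= inE.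
Qed.
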